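(* Let $V$ be a finite set of variables and let $(\mathit{base}_0, \mathit{stay}_0, \mathit{step}_0, \mathit{conc}_0)$ and $(\mathit{base}_1, \mathit{stay}_1, \mathit{step}_1, \mathit{conc}_1)$ be generalized acceleration lemmas (GALs) over $V$. Define $$\mathit{stayBase} := \bigwedge_{i \in \{0,1\}}\big((\mathit{base}_i \land \lnot \mathit{base}_{1 - i}) \to \mathit{base}_i[V \mapsto V']\big),$$ $$\mathit{step} := \mathit{stayBase} \land \bigvee_{i \in \{0, 1\}}(\mathit{step}_i \land \lnot\mathit{base}_i \land \mathit{stay}_{1 - i}).$$ Then the tuple $(\mathit{base}_0 \land \mathit{base}_1,\ \mathit{stay}_0 \land \mathit{stay}_1 \land \mathit{stayBase},\ \mathit{step},\ \mathit{conc}_0 \land \mathit{conc}_1)$ is also a GAL over $V$.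
   Context: Fix a first-order theory $T$. For a set of variables $X$, $\mathcal{A}(X)$ denotes the set of assignments $\nu: X \to \mathcal{V}$ (values). $X' = \{x' \mid x \in X\}$ is a disjoint primed copy of $X$; for $\nu \in \mathcal{A}(X)$, $\nu' \in \mathcal{A}(X')$ is given by $\nu'(x') = \nu(x)$; for $\nu_1,\nu_2 \in \mathcal{A}(X)$, $\langle \nu_1,\nu_2\rangle := \nu_1 \uplus \nu_2'$. $\nu \models_T \alpha$ denotes entailment in $T$. For a formula $\alpha$, $\alpha[V\mapsto V']$ is the result of replacing each $v\in V$ simultaneously by $v'$. A generalized acceleration lemma (GAL) over $V$ is a tuple $(\mathit{base}, \mathit{stay}, \mathit{step}, \mathit{conc})$ of first-order formulas with $\mathit{base}, \mathit{conc}$ having free variables in $V$ and $\mathit{stay}, \mathit{step}$ having free variables in $V \cup V'$, such that: (I) for every sequence $\alpha \in \mathcal{A}(V)^\omega$ with $\alpha[0] \models_T \mathit{conc}$, if (a) for all $i$, $\langle\alpha[i],\alpha[i+1]\rangle \models_T \mathit{step} \lor \mathit{stay}$, and (b) for all $i$ there is $j \ge i$ with $\langle\alpha[j],\alpha[j+1]\rangle \models_T \mathit{step}$, then there is $k$ with $\alpha[k] \models_T \mathit{base}$; and (II) for all $\nu,\nu' \in \mathcal{A}(V)$ with $\nu \models_T \mathit{conc}$ and $\langle \nu,\nu'\rangle \models_T \mathit{step}\lor\mathit{stay}$, we have $\nu' \models_T \mathit{conc}$. *)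

From mathcomp Require Import all_boot.
Set Implicit Arguments. Unset Strict Implicit. Unset Printing Implicit Defensive.

(* Semantic rendering of first-order formulas modulo the fixed theory T:
   a formula with free variables in X is identified with its satisfaction
   predicate on assignments nu : X -> Val (nu |=_T alpha).  *)
Definition assign (Val X : Type) := X -> Val.
Definition form (Val X : Type) := assign Val X -> Prop.

Definition sat {Val X : Type} (nu : assign Val X) (a : form Val X) : Prop := a nu.

Definition fAnd {Val X} (a b : form Val X) : form Val X := fun nu => a nu /\ b nu.
Definition fOr  {Val X} (a b : form Val X) : form Val X := fun nu => a nu \/ b nu.
Definition fNot {Val X} (a : form Val X) : form Val X := fun nu => ~ a nu.
Definition fImp {Val X} (a b : form Val X) : form Val X := fun nu => a nu -> b nu.

(* V u V' is represented as the disjoint sum V + V: inl x is x, inr x is x'. *)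
Definition pairA {Val V : Type} (nu1 nu2 : assign Val V) : assign Val (V + V) :=
  fun z => match z with inl x => nu1 x | inr x => nu2 x end.

Definition liftV {Val V : Type} (a : form Val V) : form Val (V + V) :=
  fun mu => a (fun x => mu (inl x)).

Definition primeV {Val V : Type} (a : form Val V) : form Val (V + V) :=
  fun mu => a (fun x => mu (inr x)).

Definition is_GAL {Val V : Type} (base : form Val V) (stay step : form Val (V + V))
    (conc : form Val V) : Prop :=
  (forall alpha : nat -> assign Val V,
      sat (alpha 0) conc ->
      (forall i, sat (pairA (alpha i) (alpha i.+1)) (fOr step stay)) ->
      (forall i, exists j, i <= j /\ sat (pairA (alpha j) (alpha j.+1)) step) ->
      exists k, sat (alpha k) base)
  /\
  (forall nu nu' : assign Val V,
      sat nu conc -> sat (pairA nu nu') (fOr step stay) -> sat nu' conc).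

(* Along a run of the combined system each component follows its own
   transition relation, so the conclusions are preserved and each component
   lemma applies.  Every combined step is a step of some component i taken
   outside base_i, and by pigeonhole one component i does so infinitely
   often.  That component reaches base_i at some point k; a later step of
   component i happens outside base_i, and stayBase forbids leaving base_i
   while base_(1-i) fails, so both bases hold somewhere in between. *)

From Stdlib Require Import Classical.
From mathcomp Require Import all_boot.

Set Implicit Arguments.
Unset Strict Implicit.

Definition infinitely_often (P : nat -> Prop) : Prop :=
  forall i, exists j, i <= j /\ P j.

Lemma infinitely_often_sub (P Q : nat -> Prop) :
  (forall n, P n -> Q n) -> infinitely_often P -> infinitely_often Q.
Proof. by move=> PQ infP i; have [j [le_ij /PQ Qj]] := infP i; exists j. Qed.

Lemma infinitely_often_or (P Q : nat -> Prop) :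
  infinitely_often (fun n => P n \/ Q n) ->
  infinitely_often P \/ infinitely_often Q.
Proof.
move=> infPQ; have [infP | finP] := classic (infinitely_often P); [by left | right].
have [i0 noP] := not_all_ex_not _ _ finP.
move=> i; have [j [/[!geq_max] /andP[le_ij le_i0j] [Pj | Qj]]] := infPQ (maxn i i0).
- by case: noP; exists j.
- by exists j.
Qed.

Lemma persist_until_meet (P Q : nat -> Prop) (k j : nat) :
  (forall n, P n -> ~ Q n -> P n.+1) -> k <= j -> P k -> ~ P j ->
  exists m, P m /\ Q m.
Proof.
move=> PQ /subnKC <-; move: (j - k) => d; elim: d k => [|d IH] n Pn notP.
  by rewrite addn0 in notP.
have [Qn | nQn] := classic (Q n); first by exists n.
by apply: (IH n.+1 (PQ n Pn nQn)); rewrite addSnnS.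
Qed.

Lemma GAL_run_common_base (Val V : Type) (b b' : form Val V) (st sp : form Val (V + V))
    (c : form Val V) (alpha : nat -> assign Val V) :
  is_GAL b st sp c -> c (alpha 0) ->
  (forall n, sp (pairA (alpha n) (alpha n.+1)) \/ st (pairA (alpha n) (alpha n.+1))) ->
  infinitely_often (fun n => sp (pairA (alpha n) (alpha n.+1)) /\ ~ b (alpha n)) ->
  (forall n, b (alpha n) -> ~ b' (alpha n) -> b (alpha n.+1)) ->
  exists k, b (alpha k) /\ b' (alpha k).
Proof.
move=> [reach _] c0 run inf_sp persist.
have [k bk] : exists k, b (alpha k).
  by apply: reach => //; apply: infinitely_often_sub inf_sp => n [].
have [j [le_kj [_ not_bj]]] := inf_sp k.
exact: persist_until_meet persist le_kj bk not_bj.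
Qed.

Theorem lemma1 (Val : Type) (V : finType)
  (base0 : form Val V) (stay0 step0 : form Val (V + V)) (conc0 : form Val V)
  (base1 : form Val V) (stay1 step1 : form Val (V + V)) (conc1 : form Val V) :
  is_GAL base0 stay0 step0 conc0 ->
  is_GAL base1 stay1 step1 conc1 ->
  let stayBase : form Val (V + V) :=
    fAnd (fImp (fAnd (liftV base0) (fNot (liftV base1))) (primeV base0))
         (fImp (fAnd (liftV base1) (fNot (liftV base0))) (primeV base1)) in
  let step : form Val (V + V) :=
    fAnd stayBase
         (fOr (fAnd step0 (fAnd (fNot (liftV base0)) stay1))
              (fAnd step1 (fAnd (fNot (liftV base1)) stay0))) in
  is_GAL (fAnd base0 base1) (fAnd stay0 (fAnd stay1 stayBase)) step (fAnd conc0 conc1).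
Proof.
move=> G0 G1 stayBase step.
have trans_split nu nu' :
    sat (pairA nu nu') (fOr step (fAnd stay0 (fAnd stay1 stayBase))) ->
    [/\ step0 (pairA nu nu') \/ stay0 (pairA nu nu'),
        step1 (pairA nu nu') \/ stay1 (pairA nu nu'),
        base0 nu -> ~ base1 nu -> base0 nu'
      & base1 nu -> ~ base0 nu -> base1 nu'].
  by cbv [sat step stayBase fOr fAnd fImp fNot liftV primeV pairA]; split; tauto.
have step_split nu nu' : sat (pairA nu nu') step ->
    (step0 (pairA nu nu') /\ ~ base0 nu) \/ (step1 (pairA nu nu') /\ ~ base1 nu).
  by cbv [sat step stayBase fOr fAnd fImp fNot liftV primeV pairA]; tauto.
split=> [alpha [c0 c1] run inf_step | nu nu' [c0 c1] /trans_split[t0 t1 _ _]].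
  have run_split n := trans_split _ _ (run n).
  have [inf0 | inf1] := infinitely_often_or (infinitely_often_sub
                          (fun n => step_split _ _) inf_step).
  - by apply: (GAL_run_common_base G0 c0 _ inf0) => n; case: (run_split n).
  - have [k [b1k b0k]] : exists k, base1 (alpha k) /\ base0 (alpha k).
      by apply: (GAL_run_common_base G1 c1 _ inf1) => n; case: (run_split n).
    by exists k.
by split; [exact: G0.2 _ _ c0 t0 | exact: G1.2 _ _ c1 t1].
Qed.
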